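(* For $(\sigma,u)\in\mathbb R\times\mathbb R^3$ let $R=R(\sigma,u)=2(uu^\top-\sigma[u]_\times)+(\sigma^2-\|u\|^2)I$. For vectors $q_s',q_s''\in\mathbb R^3$, $s\in\{i,j,k\}$, define: - $G_{ijk}$: the $3\times 3$ matrix with rows $(Rq_i'\times q_i'')^\top$, $(Rq_j'\times q_j'')^\top$, $(Rq_k'\times q_k'')^\top$; - for $l\in\{j,k\}$, the $1\times 2$ row $F_{il}=\big[\,q_l''^\top R[q_i']_\times q_l',\ \ -q_l''^\top [q_i'']_\times R\, q_l'\,\big]$, and $F_{ijk}=\begin{bmatrix}F_{ij}\\ F_{ik}\end{bmatrix}$ (a $2\times2$ matrix). Then, as an identity in $(\sigma,u)$ (up to a global sign), $$\det G_{ijk}=\pm(\|u\|^2+\sigma^2)\,\det F_{ijk}.$$ In particular, setting $\sigma=1$ and $u=v$, the same identity holds with the factor $\|v\|^2+1$.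
   Context: $[a]_\times$ is the skew-symmetric matrix with $[a]_\times b=a\times b$. When $\|u\|^2+\sigma^2=1$, $R(\sigma,u)$ is the rotation matrix of the unit quaternion $[\sigma\ u^\top]$; in general $R(\sigma,u)$ equals $(\sigma^2+\|u\|^2)$ times a rotation matrix. $F_{il}$ arises by substituting $t'=\lambda_i q_i'$, $t''=\mu_i q_i''$ into the epipolar constraint $q_l''^\top(R[t']_\times-[t'']_\times R)q_l'=0$, giving $F_{il}[\lambda_i\ \mu_i]^\top=0$. *)

From HB Require Import structures.
From mathcomp Require Import all_boot all_order all_algebra.
Set Implicit Arguments. Unset Strict Implicit. Unset Printing Implicit Defensive.
Import Order.TTheory GRing.Theory Num.Theory.
Local Open Scope ring_scope.

Section Defs.
Variable R : realFieldType.

Definition cc (a : 'cV[R]_3) (k : nat) : R := a (inord k) 0.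

Definition cross (a b : 'cV[R]_3) : 'cV[R]_3 :=
  \col_(i < 3)
    (if (i : nat) == 0%N then cc a 1 * cc b 2 - cc a 2 * cc b 1
     else if (i : nat) == 1%N then cc a 2 * cc b 0 - cc a 0 * cc b 2
     else cc a 0 * cc b 1 - cc a 1 * cc b 0).

Definition evec (j : 'I_3) : 'cV[R]_3 := \col_(i < 3) (i == j)%:R.

Definition skew (a : 'cV[R]_3) : 'M[R]_3 :=
  \matrix_(i < 3, j < 3) cross a (evec j) i 0.

Definition norm2 (u : 'cV[R]_3) : R := \sum_(i < 3) u i 0 ^+ 2.

Definition rotR (sigma : R) (u : 'cV[R]_3) : 'M[R]_3 :=
  2%:R *: (u *m u^T - sigma *: skew u) + (sigma ^+ 2 - norm2 u) *: 1%:M.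

Definition Gmat (Rm : 'M[R]_3) (qi1 qi2 qj1 qj2 qk1 qk2 : 'cV[R]_3) : 'M[R]_3 :=
  \matrix_(m < 3, n < 3)
    (if (m : nat) == 0%N then cross (Rm *m qi1) qi2 n 0
     else if (m : nat) == 1%N then cross (Rm *m qj1) qj2 n 0
     else cross (Rm *m qk1) qk2 n 0).

Definition Fent1 (Rm : 'M[R]_3) (qi1 ql1 ql2 : 'cV[R]_3) : R :=
  (ql2^T *m Rm *m skew qi1 *m ql1) 0 0.
Definition Fent2 (Rm : 'M[R]_3) (qi2 ql1 ql2 : 'cV[R]_3) : R :=
  - (ql2^T *m skew qi2 *m Rm *m ql1) 0 0.

Definition Fmat (Rm : 'M[R]_3) (qi1 qi2 qj1 qj2 qk1 qk2 : 'cV[R]_3) : 'M[R]_2 :=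
  \matrix_(a < 2, b < 2)
    (if (a : nat) == 0%N then
       (if (b : nat) == 0%N then Fent1 Rm qi1 qj1 qj2 else Fent2 Rm qi2 qj1 qj2)
     else
       (if (b : nat) == 0%N then Fent1 Rm qi1 qk1 qk2 else Fent2 Rm qi2 qk1 qk2)).

End Defs.

From Pilot Require Import Defs.
From HB Require Import structures.
From mathcomp Require Import all_boot all_order all_algebra.
From mathcomp Require Import ring.
Import Order.TTheory GRing.Theory Num.Theory.
Local Open Scope ring_scope.

(* Write [p q r] := p . (q x r) for the scalar triple product and
   n := |u|^2 + sigma^2.  The argument splits into three facts.
   1. (det_cross_rows) For arbitrary vectors x_s, y_s (s = i, j, k), the
      determinant of the matrix with rows x_s x y_s is
         [y_j x_i x_j] [y_k y_i x_k] - [y_j y_i x_j] [y_k x_i x_k],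
      a polynomial identity checked in coordinates.
   2. (cross_rotR) R = R(sigma,u) is n times a rotation, hence its cofactor
      matrix is n R:  (R a) x (R c) = n R (a x c).
   3. (Fent1_triple, Fent2_triple) The entries of F are triple products:
      n F_il[1] = [q_l'', R q_i', R q_l']  and  F_il[2] = -[q_l'', q_i'', R q_l'].
   Applying 1 with x_s = R q_s', y_s = q_s'' and rewriting with 2 and 3
   gives det G = -n det F. *)

Section CrossProductDeterminant.
Variable R : realFieldType.

Notation o1 := (lift ord0 (ord0 : 'I_2)).
Notation o2 := (lift ord0 (lift ord0 (ord0 : 'I_1))).

Definition vec3 (x y z : R) : 'cV[R]_3 := \col_(i < 3) nth 0 [:: x; y; z] i.
Definition mat3 (a b c d e f g h k : R) : 'M[R]_3 :=
  \matrix_(i < 3, j < 3)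
    nth 0 (nth [::] [:: [:: a; b; c]; [:: d; e; f]; [:: g; h; k]] i) j.

Definition triple (p q r : 'cV[R]_3) : R := (p^T *m cross q r) 0 0.

Lemma vecE (v : 'cV[R]_3) : v = vec3 (v ord0 0) (v o1 0) (v o2 0).
Proof.
apply/matrixP => i j; rewrite !mxE ord1.
by case: i => [[|[|[|]]] Hi] //=; congr (v _ _); apply: val_inj.
Qed.

Lemma mx3E (A : 'M[R]_3) : A = mat3 (A ord0 ord0) (A ord0 o1) (A ord0 o2)
  (A o1 ord0) (A o1 o1) (A o1 o2) (A o2 ord0) (A o2 o1) (A o2 o2).
Proof.
apply/matrixP => i j; rewrite !mxE.
by case: i => [[|[|[|]]] Hi]; case: j => [[|[|[|]]] Hj] //=;
   congr (A _ _); apply: val_inj.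
Qed.

Lemma vec3_coord0 x y z : vec3 x y z ord0 0 = x. Proof. by rewrite mxE. Qed.
Lemma vec3_coord1 x y z : vec3 x y z o1 0 = y. Proof. by rewrite mxE. Qed.
Lemma vec3_coord2 x y z : vec3 x y z o2 0 = z. Proof. by rewrite mxE. Qed.

(* [cc] in Defs addresses coordinates through [inord]. *)
Lemma inord_coords :
  [/\ (inord 0 : 'I_3) = ord0, (inord 1 : 'I_3) = o1 & (inord 2 : 'I_3) = o2].
Proof. by split; apply: val_inj; rewrite /= inordK. Qed.

Lemma det3E a b c d e f g h k : \det (mat3 a b c d e f g h k) =
  a * (e * k - f * h) - b * (d * k - f * g) + c * (d * h - e * g).
Proof.
rewrite (expand_det_row _ ord0) !big_ord_recl big_ord0 /cofactor.
rewrite !(expand_det_row _ ord0) !big_ord_recl !big_ord0 /cofactor.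
by rewrite !det_mx11 !mxE /= !expr0 !expr1; ring.
Qed.

Lemma det2E (A : 'M[R]_2) : \det A =
  A ord0 ord0 * A (lift ord0 ord0) (lift ord0 ord0)
  - A ord0 (lift ord0 ord0) * A (lift ord0 ord0) ord0.
Proof.
rewrite (expand_det_row _ ord0) !big_ord_recl big_ord0 /cofactor.
rewrite !det_mx11 !mxE /= !expr0 !expr1.
have -> : (lift ord0 (0 : 'I_1) : 'I_2) = lift ord0 ord0 by apply: val_inj.
have -> : (lift (lift ord0 ord0) (0 : 'I_1) : 'I_2) = ord0 by apply: val_inj.
ring.
Qed.

Lemma crossE a b c d e f : cross (vec3 a b c) (vec3 d e f) =
  vec3 (b * f - c * e) (c * d - a * f) (a * e - b * d).
Proof.
have [i0 i1 i2] := inord_coords.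
apply/matrixP => i j; rewrite ord1.
by case: i => [[|[|[|]]] Hi] //=; rewrite /cross /cc !mxE i0 i1 i2 ?mxE.
Qed.

Lemma mulE a b c d e f g h k x y z : mat3 a b c d e f g h k *m vec3 x y z =
  vec3 (a * x + b * y + c * z) (d * x + e * y + f * z) (g * x + h * y + k * z).
Proof.
apply/matrixP => i j; rewrite ord1.
case: i => [[|[|[|]]] Hi] //=;
by rewrite !mxE !big_ord_recl big_ord0 ?mxE /=; ring.
Qed.

Lemma scaleE k x y z : k *: vec3 x y z = vec3 (k * x) (k * y) (k * z).
Proof.
apply/matrixP => i j; rewrite ord1.
by case: i => [[|[|[|]]] Hi] //=; rewrite !mxE.
Qed.

Lemma tripleE a b c d e f g h k : triple (vec3 a b c) (vec3 d e f) (vec3 g h k) =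
  a * (e * k - f * h) + b * (f * g - d * k) + c * (d * h - e * g).
Proof. by rewrite /triple crossE !mxE !big_ord_recl big_ord0 !mxE /=; ring. Qed.

Lemma skewE a b c : Defs.skew (vec3 a b c) = mat3 0 (- c) b c 0 (- a) (- b) a 0.
Proof.
have [i0 i1 i2] := inord_coords.
apply/matrixP => i j.
case: i => [[|[|[|]]] Hi]; case: j => [[|[|[|]]] Hj] //=;
by rewrite /Defs.skew /cross /cc /evec !mxE i0 i1 i2 ?mxE /=; ring.
Qed.

Lemma skew_mulmx (a b : 'cV[R]_3) : Defs.skew a *m b = cross a b.
Proof.
rewrite (vecE a) (vecE b) skewE mulE crossE.
by congr vec3; ring.
Qed.

Lemma norm2E (u : 'cV[R]_3) :
  norm2 u = u ord0 0 ^+ 2 + u o1 0 ^+ 2 + u o2 0 ^+ 2.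
Proof.
rewrite /norm2 !big_ord_recl big_ord0 addr0 addrA.
by congr (_ + _ ^+ 2 + _ ^+ 2).
Qed.

Lemma det_cross_rows (x1 y1 x2 y2 x3 y3 : 'cV[R]_3) :
  \det (Gmat 1%:M x1 y1 x2 y2 x3 y3) =
  triple y2 x1 x2 * triple y3 y1 x3 - triple y2 y1 x2 * triple y3 x1 x3.
Proof.
rewrite (vecE x1) (vecE y1) (vecE x2) (vecE y2) (vecE x3) (vecE y3).
rewrite /Gmat !mul1mx !crossE !tripleE (mx3E (\matrix_(_, _) _)) det3E !mxE /=.
ring.
Qed.

Lemma rotRE sigma u0 u1 u2 :
  let n := u0 ^+ 2 + u1 ^+ 2 + u2 ^+ 2 in
  rotR sigma (vec3 u0 u1 u2) =
  mat3 (2%:R * u0 ^+ 2 + sigma ^+ 2 - n) (2%:R * (u0 * u1 + sigma * u2))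
         (2%:R * (u0 * u2 - sigma * u1))
       (2%:R * (u1 * u0 - sigma * u2)) (2%:R * u1 ^+ 2 + sigma ^+ 2 - n)
         (2%:R * (u1 * u2 + sigma * u0))
       (2%:R * (u2 * u0 + sigma * u1)) (2%:R * (u2 * u1 - sigma * u0))
         (2%:R * u2 ^+ 2 + sigma ^+ 2 - n).
Proof.
rewrite /rotR norm2E skewE !vec3_coord0 !vec3_coord1 !vec3_coord2.
apply/matrixP => i j.
case: i => [[|[|[|]]] Hi]; case: j => [[|[|[|]]] Hj] //=;
by rewrite !mxE !big_ord_recl big_ord0 ?mxE /=; ring.
Qed.

(* Fact 2: R(sigma,u) is (|u|^2 + sigma^2) times a rotation, so its
   cofactor matrix is (|u|^2 + sigma^2) R(sigma,u). *)
Lemma cross_rotR sigma (u a c : 'cV[R]_3) :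
  cross (rotR sigma u *m a) (rotR sigma u *m c)
  = (norm2 u + sigma ^+ 2) *: (rotR sigma u *m cross a c).
Proof.
rewrite (vecE u) (vecE a) (vecE c) norm2E rotRE.
rewrite !mulE !crossE mulE scaleE !vec3_coord0 !vec3_coord1 !vec3_coord2.
by congr vec3; ring.
Qed.

(* Fact 3: the entries of F as triple products.  The first entry needs the
   cofactor property of R(sigma,u); the second holds for any matrix. *)
Lemma Fent1_triple sigma (u a c d : 'cV[R]_3) :
  triple d (rotR sigma u *m a) (rotR sigma u *m c)
  = (norm2 u + sigma ^+ 2) * Fent1 (rotR sigma u) a c d.
Proof.
by rewrite /triple /Fent1 cross_rotR -scalemxAr mxE -!mulmxA skew_mulmx.
Qed.

Lemma Fent2_triple (M : 'M[R]_3) (b c d : 'cV[R]_3) :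
  triple d b (M *m c) = - Fent2 M b c d.
Proof. by rewrite /triple /Fent2 opprK -!mulmxA skew_mulmx. Qed.

Lemma Gmat_mulmx (M : 'M[R]_3) (a b c d e f : 'cV[R]_3) :
  Gmat M a b c d e f = Gmat 1%:M (M *m a) b (M *m c) d (M *m e) f.
Proof. by rewrite /Gmat !mul1mx. Qed.

Lemma det_Fmat (M : 'M[R]_3) (a b c d e f : 'cV[R]_3) :
  \det (Fmat M a b c d e f)
  = Fent1 M a c d * Fent2 M b e f - Fent2 M b c d * Fent1 M a e f.
Proof. by rewrite det2E !mxE. Qed.

End CrossProductDeterminant.

Theorem theorem3 (R : realFieldType) :
  exists s : R, (s = 1 \/ s = -1) /\
  forall (sigma : R) (u qi1 qi2 qj1 qj2 qk1 qk2 : 'cV[R]_3),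
    \det (Gmat (rotR sigma u) qi1 qi2 qj1 qj2 qk1 qk2)
    = s * (norm2 u + sigma ^+ 2) * \det (Fmat (rotR sigma u) qi1 qi2 qj1 qj2 qk1 qk2).
Proof.
exists (-1); split; first by right.
move=> sigma u qi1 qi2 qj1 qj2 qk1 qk2.
rewrite Gmat_mulmx det_cross_rows det_Fmat.
rewrite !Fent1_triple !Fent2_triple.
ring.
Qed.
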